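(* Let $\mathbf{I}$ be a $d$-system of ideals in a ring $R$ and $A:=\mathscr{A}(R,\mathbf{I})$. Then (i) $Ae_dA\cong(Ae_d)^{\oplus d}$ as left $A$-modules; (ii) $e_dAe_d\cong R/I_{d,d+1}$ as rings; (iii) if $d\ge2$, then $A/(Ae_dA)\cong\mathscr{A}(R,\mathbf{I}')$ as rings, where $\mathbf{I}':=\{I_{ij}\mid1\le i,j\le d\}$ (which is a $(d-1)$-system of ideals in $R$).
   Context: A $d$-system of ideals in $R$ is a collection $\{I_{ij}\mid1\le i,j\le d+1\}$ of two-sided ideals with $I_{ij}I_{jk}\subset I_{ik}$ and $I_{ij}=R$ for $i\ge j$. $\mathscr{A}(R,\mathbf{I}):=\bigoplus_{1\le i,j\le d}I_{ij}/I_{i,d+1}$ with multiplication $(x+I_{i,d+1})(y+I_{k,d+1})=\delta_{jk}(xy+I_{i,d+1})\in I_{il}/I_{i,d+1}$ for $x\in I_{ij},y\in I_{kl}$. Put $e_k:=1+I_{k,d+1}\in I_{kk}/I_{k,d+1}$ for $1\le k\le d$. *)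

From HB Require Import structures.
From mathcomp Require Import all_boot all_order all_algebra.
Set Implicit Arguments. Unset Strict Implicit. Unset Printing Implicit Defensive.
Import GRing.Theory.
Local Open Scope ring_scope.

(* Subquotient ("partial setoid") presentation of rings and modules.  *)
(* A ring given by representatives: a carrier type T, a domain        *)
(* predicate (the representatives that are allowed), an equivalence   *)
(* relation (equality in the quotient) and operations on              *)
(* representatives.  The actual ring is  dom / eq.                    *)
Record pring (T : Type) := PRing {
  pdom : T -> Prop;
  peq  : T -> T -> Prop;
  padd : T -> T -> T;
  pmul : T -> T -> T;
  pone : T }.

Definition ring_iso T U (X : pring T) (Y : pring U) (f : T -> U) : Prop :=
  (forall x, pdom X x -> pdom Y (f x)) /\
    [/\ (forall x y, pdom X x -> pdom X y -> (peq X x y <-> peq Y (f x) (f y))),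
      (forall u, pdom Y u -> exists2 x, pdom X x & peq Y (f x) u),
      (forall x y, pdom X x -> pdom X y -> peq Y (f (padd X x y)) (padd Y (f x) (f y))),
      (forall x y, pdom X x -> pdom X y -> peq Y (f (pmul X x y)) (pmul Y (f x) (f y)))
    & peq Y (f (pone X)) (pone Y)].

Definition ring_isomorphic T U (X : pring T) (Y : pring U) : Prop :=
  exists f : T -> U, ring_iso X Y f.

Record pmod (A T : Type) := PMod {
  mdom : T -> Prop;
  meq  : T -> T -> Prop;
  madd : T -> T -> T;
  mact : A -> T -> T }.

Definition mod_iso A T U (S : pring A) (M : pmod A T) (N : pmod A U) (f : T -> U) : Prop :=
  [/\ (forall x, mdom M x -> mdom N (f x)),
      (forall x y, mdom M x -> mdom M y -> (meq M x y <-> meq N (f x) (f y))),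
      (forall u, mdom N u -> exists2 x, mdom M x & meq N (f x) u),
      (forall x y, mdom M x -> mdom M y -> meq N (f (madd M x y)) (madd N (f x) (f y)))
    & (forall a x, pdom S a -> mdom M x -> meq N (f (mact M a x)) (mact N a (f x)))].

Definition mod_isomorphic A T U (S : pring A) (M : pmod A T) (N : pmod A U) : Prop :=
  exists f : T -> U, mod_iso S M N f.

(* Ideals and d-systems (indices are 1-based, as in the paper).       *)
Definition two_sided_ideal (R : pzRingType) (J : R -> Prop) : Prop :=
  [/\ J 0,
      (forall x y, J x -> J y -> J (x - y)),
      (forall r x, J x -> J (r * x))
    & (forall r x, J x -> J (x * r))].

Definition dsystem (R : pzRingType) (d : nat) (I : nat -> nat -> R -> Prop) : Prop :=
  [/\ (forall i j, (1 <= i <= d.+1)%N -> (1 <= j <= d.+1)%N -> two_sided_ideal (I i j)),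
      (forall i j k, (1 <= i <= d.+1)%N -> (1 <= j <= d.+1)%N -> (1 <= k <= d.+1)%N ->
         forall x y, I i j x -> I j k y -> I i k (x * y))
    & (forall i j, (1 <= i <= d.+1)%N -> (1 <= j <= d.+1)%N -> (j <= i)%N ->
         forall x, I i j x)].

(* The algebra A(R, I) = (+)_{1<=i,j<=d} I_ij / I_{i,d+1}.            *)
(* An element is represented by a d x d matrix M with M i j in        *)
(* I_{i+1,j+1} (matrix index i : 'I_d stands for paper index i+1);    *)
(* two representatives are equal iff entrywise M i j - N i j lies in  *)
(* I_{i+1,d+1}.  The multiplication rule                              *)
(*   (x + I_{i,d+1})(y + I_{k,d+1}) = delta_jk (xy + I_{i,d+1})       *)
(* is exactly matrix multiplication on representatives.               *)
Section Construction.
Variables (R : pzRingType) (d : nat) (I : nat -> nat -> R -> Prop).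

Definition Amem (M : 'M[R]_d) : Prop := forall i j : 'I_d, I i.+1 j.+1 (M i j).
Definition Aeq (M N : 'M[R]_d) : Prop := forall i j : 'I_d, I i.+1 d.+1 (M i j - N i j).

Definition Aring : pring 'M[R]_d :=
  @PRing _ Amem Aeq (fun M N => M + N) (fun M N => M *m N) 1%:M.

(* e_k = 1 + I_{k,d+1} in the (k,k) component (paper index k). *)
Definition eidem (k : nat) : 'M[R]_d :=
  \matrix_(i, j) (((i == j) && ((i : nat).+1 == k)))%:R.

Definition ed : 'M[R]_d := eidem d.

Definition eAe : pring 'M[R]_d :=
  @PRing _ (fun M => Amem M /\ exists2 N, Amem N & Aeq M (ed *m N *m ed))
    Aeq (fun M N => M + N) (fun M N => M *m N) ed.

Definition RmodI : pring R :=
  @PRing _ (fun _ => True) (fun x y => I d d.+1 (x - y))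
    (fun x y => x + y) (fun x y => x * y) 1.

Definition AeAmem (M : 'M[R]_d) : Prop :=
  Amem M /\ exists s : seq ('M[R]_d * 'M[R]_d),
    (forall p, p \in s -> Amem p.1 /\ Amem p.2) /\
    Aeq M (\sum_(p <- s) p.1 *m ed *m p.2).

Definition AeA : pmod 'M[R]_d 'M[R]_d :=
  @PMod _ _ AeAmem Aeq (fun M N => M + N) (fun a M => a *m M).

Definition Aemem (M : 'M[R]_d) : Prop :=
  Amem M /\ exists2 N, Amem N & Aeq M (N *m ed).

Definition AeSum : pmod 'M[R]_d ('I_d -> 'M[R]_d) :=
  @PMod _ _ (fun F => forall k, Aemem (F k)) (fun F G => forall k, Aeq (F k) (G k))
    (fun F G k => F k + G k) (fun a F k => a *m F k).

Definition AmodJ : pring 'M[R]_d :=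
  @PRing _ Amem (fun M N => AeAmem (M - N))
    (fun M N => M + N) (fun M N => M *m N) 1%:M.

End Construction.

From HB Require Import structures.
From mathcomp Require Import all_boot all_order all_algebra zify.
Set Implicit Arguments. Unset Strict Implicit.
Import GRing.Theory.
Local Open Scope ring_scope.

(* Right multiplication by [e_d] keeps only the last column, and the last
   column of [A] consists of the [I_{i,d} / I_{i,d+1}]; hence [A e_d A] is the
   set of classes with every entry in row [i] lying in [I_{i,d}], and
   [M |-> (M e_{kd})_k] identifies it with [d] copies of [A e_d].  In
   [e_d A e_d] only the [(d, d)] entry survives, an element of
   [R / I_{d,d+1}].  Finally, modulo [A e_d A] the last row is zero (as
   [I_{d,j} = R]) and the last column may be dropped (as it lies in
   [I_{i,d}]), which leaves the upper-left [(d-1) x (d-1)] block: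
   [A / A e_d A = A(R, I')]. *)

Ltac ord_lia := rewrite ?lift_max /=; repeat match goal with
  | i : ordinal _ |- _ => lazymatch goal with
      | _ : is_true (nat_of_ord i < _)%N |- _ => fail
      | _ => have := ltn_ord i; rewrite /=; intro end end; lia.

Section DSystemIdeals.
Variables (R : pzRingType) (d : nat) (I : nat -> nat -> R -> Prop).
Hypothesis hI : dsystem d I.
Local Notation bounded i := (1 <= i <= d.+1)%N.

Lemma dsys_ideal i j : bounded i -> bounded j -> two_sided_ideal (I i j).
Proof. by case: hI => h _ _; apply: h. Qed.

Lemma dsys0 i j : bounded i -> bounded j -> I i j 0.
Proof. by move=> hi hj; case: (dsys_ideal hi hj). Qed.

Lemma dsysB i j x y : bounded i -> bounded j -> I i j x -> I i j y -> I i j (x - y).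
Proof. by move=> hi hj; case: (dsys_ideal hi hj) => _ h _ _; apply: h. Qed.

Lemma dsysN i j x : bounded i -> bounded j -> I i j x -> I i j (- x).
Proof. by move=> hi hj hx; rewrite -sub0r; apply: dsysB => //; apply: dsys0. Qed.

Lemma dsysD i j x y : bounded i -> bounded j -> I i j x -> I i j y -> I i j (x + y).
Proof. by move=> hi hj hx hy; rewrite -[y]opprK; apply: dsysB => //; apply: dsysN. Qed.

Lemma dsysMr i j r x : bounded i -> bounded j -> I i j x -> I i j (x * r).
Proof. by move=> hi hj; case: (dsys_ideal hi hj) => _ _ _; apply. Qed.

Lemma dsys_full i j x : bounded i -> bounded j -> (j <= i)%N -> I i j x.
Proof. by case: hI => _ _ h hi hj hji; apply: h. Qed.

Lemma dsys_antimono i j k x :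
  bounded i -> bounded j -> bounded k -> (j <= k)%N -> I i k x -> I i j x.
Proof.
move=> hi hj hk hjk hx; rewrite -[x]mulr1; case: hI => _ hmul hfull.
by apply: (hmul i k j) => //; apply: hfull.
Qed.

Lemma dsys_sum i j (T : Type) (s : seq T) (P : pred T) (F : T -> R) :
  bounded i -> bounded j -> (forall p, P p -> I i j (F p)) ->
  I i j (\sum_(p <- s | P p) F p).
Proof.
move=> hi hj hF; apply: big_ind => //; first exact: dsys0.
by move=> x y; apply: dsysD.
Qed.

End DSystemIdeals.

Lemma dsystem_pred (R : pzRingType) d (I : nat -> nat -> R -> Prop) :
  dsystem d.+2 I -> dsystem d.+1 I.
Proof.
case=> h1 h2 h3; split.
- by move=> i j hi hj; apply: h1; lia.
- by move=> i j k hi hj hk; apply: h2; lia.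
- by move=> i j hi hj hji; apply: h3; lia.
Qed.

Lemma mxE_mulmx_delta (R : pzRingType) m n p (A : 'M[R]_(m, n)) (k : 'I_n) (l : 'I_p) i j :
  (A *m delta_mx k l) i j = A i k * (j == l)%:R.
Proof.
rewrite !mxE (bigD1 k) //= big1 => [|x /negbTE hx]; last by rewrite !mxE hx mulr0.
by rewrite !mxE eqxx addr0.
Qed.

Lemma mxE_delta_mulmx (R : pzRingType) m n p (A : 'M[R]_(n, p)) (k : 'I_m) (l : 'I_n) i j :
  (delta_mx k l *m A) i j = (i == k)%:R * A l j.
Proof.
rewrite !mxE (bigD1 l) //= big1 => [|x /negbTE hx]; last by rewrite !mxE hx andbF mul0r.
by rewrite !mxE eqxx andbT addr0.
Qed.

Lemma edE (R : pzRingType) n : ed R n.+1 = delta_mx ord_max ord_max.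
Proof.
apply/matrixP => i j; rewrite !mxE.
case: (eqVneq i j) => [<-|hij] /=.
  by rewrite andbb; congr (_%:R); apply/eqP/eqP => [h|->] //; apply: val_inj => /=; lia.
case: (eqVneq i ord_max) => [hi|] //=; case: (eqVneq j ord_max) => [hj|] //=.
by move: hij; rewrite hi hj eqxx.
Qed.

Section Algebra.
Variables (R : pzRingType) (n : nat) (I : nat -> nat -> R -> Prop).
Hypothesis hI : dsystem n.+1 I.
Local Notation e := (ed R n.+1).

Lemma Aeq_refl (M : 'M[R]_n.+1) : Aeq I M M.
Proof. by move=> i j; rewrite subrr; apply: (dsys0 hI); ord_lia. Qed.

Lemma Amem_mul_delta_max (M : 'M[R]_n.+1) (k : 'I_n.+1) :
  (forall i : 'I_n.+1, I i.+1 n.+1 (M i k)) -> Amem I (M *m delta_mx k ord_max).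
Proof.
move=> hM i j; rewrite mxE_mulmx_delta; case: (eqVneq j ord_max) => [->|_].
  by rewrite mulr1.
by rewrite mulr0; apply: (dsys0 hI); ord_lia.
Qed.

Lemma AeAmemP (M : 'M[R]_n.+1) :
  AeAmem I M <-> forall i j : 'I_n.+1, I i.+1 n.+1 (M i j).
Proof.
split=> [[_ [s [hs hM]]] i j | hM].
  have hsum : I i.+1 n.+1 ((\sum_(p <- s) p.1 *m e *m p.2) i j).
    rewrite summxE big_seq; apply: (dsys_sum hI) => [||p /hs [h1 _]]; try ord_lia.
    rewrite -mulmxA edE mxE; apply: (dsys_sum hI) => [||k _]; try ord_lia.
    rewrite mxE_delta_mulmx; case: (eqVneq k ord_max) => [->|_].
      by rewrite mul1r; apply: (dsysMr hI); [ord_lia | ord_lia | exact: (h1 i ord_max)].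
    by rewrite mul0r mulr0; apply: (dsys0 hI); ord_lia.
  rewrite -[M i j](subrK ((\sum_(p <- s) p.1 *m e *m p.2) i j)).
  by apply: (dsysD hI) hsum; try ord_lia; apply: (dsys_antimono hI) (hM i j); ord_lia.
split; first by move=> i j; apply: (dsys_antimono hI) (hM i j); ord_lia.
(* [M = sum_j (M e_{jd}) e_d e_{dj}], and [e_{dj}] lies in [A] as [I_{d,j} = R]. *)
exists [seq (M *m delta_mx j ord_max, delta_mx ord_max j) | j <- index_enum 'I_n.+1].
split.
  move=> _ /mapP [j _ ->]; have hj := ltn_ord j.
  split; first by apply: Amem_mul_delta_max => i; apply: hM.
  move=> a b; rewrite mxE; case: (eqVneq a ord_max) => [->|_] /=.
    by case: (eqVneq b j) => [->|_] /=; [apply: (dsys_full hI) | apply: (dsys0 hI)]; ord_lia.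
  by apply: (dsys0 hI); ord_lia.
move=> a b; rewrite summxE big_map.
rewrite (eq_bigr (fun j => M a j * (b == j)%:R)); last first.
  by move=> j _; rewrite edE -!mulmxA !mul_delta_mx mxE_mulmx_delta.
rewrite (bigD1 b) //= eqxx mulr1 big1 ?addr0; first exact: Aeq_refl.
by move=> j; rewrite eq_sym => /negbTE ->; rewrite mulr0.
Qed.

Lemma Aemem_offcol (M : 'M[R]_n.+1) (i j : 'I_n.+1) :
  Aemem I M -> j != ord_max -> I i.+1 n.+2 (M i j).
Proof.
move=> [_ [N _ hM]] hj; have := hM i j.
by rewrite edE mxE_mulmx_delta (negbTE hj) mulr0 subr0.
Qed.

Lemma AeA_isomorphic_AeSum : mod_isomorphic (Aring n.+1 I) (AeA n.+1 I) (AeSum n.+1 I).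
Proof.
exists (fun M k => M *m delta_mx k ord_max); split.
- move=> M /AeAmemP hM k; have hMk := Amem_mul_delta_max (fun i => hM i k).
  split=> //; exists (M *m delta_mx k ord_max) => //.
  by rewrite edE -mulmxA mul_delta_mx; exact: Aeq_refl.
- move=> M N _ _; split=> [h k i j | h i j].
    by rewrite !mxE_mulmx_delta -mulrBl; apply: (dsysMr hI); try ord_lia; apply: h.
  by have := h j i ord_max; rewrite !mxE_mulmx_delta eqxx !mulr1.
- move=> F hF; exists (\matrix_(i, j) F j i ord_max).
    by apply/AeAmemP => i j; rewrite mxE; case: (hF j) => h _; exact: (h i ord_max).
  move=> k i j; rewrite mxE_mulmx_delta mxE; case: (eqVneq j ord_max) => [->|hj].
    by rewrite mulr1 subrr; apply: (dsys0 hI); ord_lia.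
  by rewrite mulr0 sub0r; apply: (dsysN hI); try ord_lia; apply: Aemem_offcol.
- by move=> M N _ _ /= k; rewrite mulmxDl; exact: Aeq_refl.
- by move=> a M _ _ /= k; rewrite mulmxA; exact: Aeq_refl.
Qed.

Lemma eAe_offcorner (M N : 'M[R]_n.+1) (i j : 'I_n.+1) :
  Aeq I M (e *m N *m e) -> ~~ ((i == ord_max) && (j == ord_max)) -> I i.+1 n.+2 (M i j).
Proof.
move=> hM hij; have := hM i j; rewrite edE mxE_mulmx_delta mxE_delta_mulmx.
case: (eqVneq i ord_max) hij => [_|_] /=; case: (eqVneq j ord_max) => //= _ _;
  by rewrite ?mulr0 ?mul0r subr0.
Qed.

Lemma eAe_isomorphic_RmodI : ring_isomorphic (eAe n.+1 I) (RmodI n.+1 I).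
Proof.
exists (fun M => M ord_max ord_max); split=> //; split.
- move=> M N [_ [M' _ hM]] [_ [N' _ hN]].
  split=> [h | h i j]; first exact: (h ord_max ord_max).
  case: (boolP ((i == ord_max) && (j == ord_max))) => [/andP [/eqP -> /eqP ->] // | hij].
  by apply: (dsysB hI);
    [ord_lia | ord_lia | exact: eAe_offcorner hM _ | exact: eAe_offcorner hN _].
- move=> u _.
  pose X : 'M[R]_n.+1 := \matrix_(i, j) (((i == ord_max) && (j == ord_max))%:R * u).
  have hX : Amem I X.
    move=> i j; rewrite mxE; case: (eqVneq i ord_max) => [->|_] /=.
      by case: (eqVneq j ord_max) => [->|_] /=; rewrite ?mul1r ?mul0r;
        [apply: (dsys_full hI) | apply: (dsys0 hI)]; ord_lia.
    by rewrite mul0r; apply: (dsys0 hI); ord_lia.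
  exists X; last by rewrite /= mxE !eqxx mul1r subrr; apply: (dsys0 hI); ord_lia.
  split=> //; exists X => // i j; rewrite edE mxE_mulmx_delta mxE_delta_mulmx !mxE !eqxx /=.
  by case: eqP => _; case: eqP => _ /=;
    rewrite ?mul0r ?mul1r ?mulr0 ?mulr1 subrr; apply: (dsys0 hI); ord_lia.
- by move=> M N _ _ /=; rewrite !mxE subrr; apply: (dsys0 hI); ord_lia.
- move=> M N [_ [M' _ hM]] _ /=.
  rewrite mxE (bigD1 ord_max) //= addrAC subrr add0r.
  apply: (dsys_sum hI) => [||k hk]; try ord_lia; apply: (dsysMr hI); try ord_lia.
  by apply: (eAe_offcorner (i := ord_max) (j := k) hM); rewrite (negbTE hk) andbF.
- by rewrite /= edE mxE !eqxx subrr; apply: (dsys0 hI); ord_lia.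
Qed.

End Algebra.

Lemma AmodJ_isomorphic_Aring_pred (R : pzRingType) m (I : nat -> nat -> R -> Prop) :
  dsystem m.+2 I -> ring_isomorphic (AmodJ m.+2 I) (Aring m.+1 I).
Proof.
move=> hI; pose l := @lift m.+2 ord_max.
exists (fun M : 'M[R]_m.+2 => \matrix_(i, j) M (l i) (l j)); split.
  by move=> M hM i j; rewrite mxE; have := hM (l i) (l j); rewrite !lift_max.
split.
- move=> M N hM hN /=; split=> [/AeAmemP h i j | h].
    by have := h hI (l i) (l j); rewrite !mxE !lift_max.
  apply/(AeAmemP hI) => i j; rewrite !mxE.
  case: (unliftP ord_max i) => [i' -> | ->]; last by apply: (dsys_full hI); ord_lia.
  case: (unliftP ord_max j) => [j' -> | ->]; first by have := h i' j'; rewrite !mxE lift_max.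
  by apply: (dsysB hI);
    [ord_lia | ord_lia | exact: (hM (l i') ord_max) | exact: (hN (l i') ord_max)].
- move=> U hU.
  exists (\matrix_(i, j) oapp (fun i' => oapp (U i') 0 (unlift ord_max j)) 0 (unlift ord_max i)).
    move=> i j; rewrite mxE.
    case: (unliftP ord_max i) => [i' -> | _]; rewrite ?lift_max /=;
      last by apply: (dsys0 hI); ord_lia.
    case: (unliftP ord_max j) => [j' -> | _]; rewrite ?lift_max /=;
      last by apply: (dsys0 hI); ord_lia.
    exact: hU.
  by move=> i j; rewrite !mxE !liftK /= subrr; apply: (dsys0 hI); ord_lia.
- by move=> M N _ _ i j /=; rewrite !mxE subrr; apply: (dsys0 hI); ord_lia.
- move=> M N hM _ i j /=; rewrite !mxE (bigD1_ord ord_max) //=.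
  under [X in _ - X]eq_bigr do rewrite !mxE.
  (* the dropped term [M_{i,d} N_{d,j}] lies in [I_{i,d} R], and [I_{i,d} = I_{i,(d-1)+1}] *)
  rewrite addrK; apply: (dsysMr hI);
    [ord_lia | ord_lia | by have := hM (l i) ord_max; rewrite lift_max].
- by move=> i j /=; rewrite !mxE (inj_eq lift_inj) subrr; apply: (dsys0 hI); ord_lia.
Qed.

Theorem proposition3p7 (R : pzRingType) (d : nat) (I : nat -> nat -> R -> Prop)
    (hd : (0 < d)%N) (hI : dsystem d I) :
  [/\ mod_isomorphic (Aring d I) (AeA d I) (AeSum d I),
      ring_isomorphic (eAe d I) (RmodI d I)
    & ((1 < d)%N -> dsystem d.-1 I /\ ring_isomorphic (AmodJ d I) (Aring d.-1 I))].
Proof.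
case: d hd hI => [//|n] _ hI.
split; [exact: AeA_isomorphic_AeSum | exact: eAe_isomorphic_RmodI |].
case: n hI => [//|m] hI _.
by split; [exact: dsystem_pred | exact: AmodJ_isomorphic_Aring_pred].
Qed.
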